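(* Let $k\ge1$, let $\mathcal A$ be a unital algebra with unit $\mathbf 1$, and let $(\mathbf u_n)_{n\in\mathbb Z}$ be invertible elements of $\mathcal A$ satisfying, for all $n\in\mathbb Z$, $$\mathbf u_{2n+2k+1}\mathbf u_{2n}=\mathbf u_{2n+1}\mathbf u_{2n+2k}+\mathbf 1,\qquad \mathbf u_{2n+1}\mathbf u_{2n+2k+2}=\mathbf u_{2n+2k+1}\mathbf u_{2n+2}+\mathbf 1 .$$ Then for all $n,i\in\mathbb Z$, $\mathbf u_n$ is a positive Laurent polynomial of the initial data $\mathbf x_i=(\mathbf u_i,\mathbf u_{i+1},\dots,\mathbf u_{i+2k})$: there is a finite sum, with non-negative integer coefficients, of words in $X_0^{\pm1},\dots,X_{2k}^{\pm1}$ (depending only on $n,i,k$) which evaluates to $\mathbf u_n$ at $X_j=\mathbf u_{i+j}$. *)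

From HB Require Import structures.
From mathcomp Require Import all_boot all_order all_algebra.
Set Implicit Arguments. Unset Strict Implicit. Unset Printing Implicit Defensive.
Import Order.TTheory GRing.Theory Num.Theory.
Local Open Scope ring_scope.

(* A letter of a Laurent word in the noncommuting variables X_0, ..., X_(m-1):
   (j, true) stands for X_j and (j, false) for X_j^{-1}. *)
Definition letter (m : nat) := ('I_m * bool)%type.
Definition word (m : nat) := seq (letter m).

(* A positive Laurent polynomial: a finite formal sum  sum_l c_l * w_l
   with non-negative integer coefficients c_l and words w_l. *)
Definition pos_laurent (m : nat) := seq (nat * word m).

Definition eval_word (R : unitRingType) (m : nat) (x : 'I_m -> R) (w : word m) : R :=
  \prod_(l <- w) (if l.2 then x l.1 else (x l.1)^-1).

Definition eval_pos_laurent (R : unitRingType) (m : nat) (x : 'I_m -> R)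
    (P : pos_laurent m) : R :=
  \sum_(t <- P) (eval_word x t.2) *+ t.1.

From HB Require Import structures.
From mathcomp Require Import all_boot all_order all_algebra.
From mathcomp Require Import zify.
Import GRing.Theory Num.Theory.
Set Implicit Arguments. Unset Strict Implicit. Unset Printing Implicit Defensive.
Local Open Scope ring_scope.

(** Along the window [x_0, ..., x_K], [K = 2k], the relations say that the
   ratios [rho_j = x_j^-1 x_(j+K)] (multiplied on the side dictated by the
   parity of [j]) grow by the positive increments [x_j^-1 x_(j+1)^-1], and
   that [rho_(j+K) + rho_j^-1] is invariant.  Write
   [x_(n+K) = x_n rho_0 + Phi_0(n)] with the defect
   [Phi_a(n) = x_(n+K) - x_n rho_a].  Then [Phi_a(n)] differs from
   [Phi_(a+1)(n)] by the positive term [x_n x_a^-1 x_(a+1)^-1],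
   [Phi_n(n) = 0] and [Phi_K(n+K) = Phi_0(n) rho_0^-1], so a strong induction
   on [n] makes both [x_n] and [Phi_0(n)] positive Laurent polynomials of the
   window.  Indices to the left of the window follow from the symmetry
   [u_m |-> u_(-m)] of the relations. *)

Section PosLaurentAlgebra.
Variables (R : unitRingType) (m : nat).
Implicit Types (x y : 'I_m -> R) (P Q : pos_laurent m).

Lemma eval_word_cat x (w1 w2 : word m) :
  eval_word x (w1 ++ w2) = eval_word x w1 * eval_word x w2.
Proof. by rewrite /eval_word big_cat. Qed.

Lemma eval_pos_laurent_cat x P Q :
  eval_pos_laurent x (P ++ Q) = eval_pos_laurent x P + eval_pos_laurent x Q.
Proof. by rewrite /eval_pos_laurent big_cat. Qed.

Definition pos_laurent_mul P Q : pos_laurent m :=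
  [seq ((t.1 * s.1)%N, t.2 ++ s.2) | t <- P, s <- Q].

Lemma eval_pos_laurent_mul x P Q :
  eval_pos_laurent x (pos_laurent_mul P Q) = eval_pos_laurent x P * eval_pos_laurent x Q.
Proof.
rewrite /eval_pos_laurent big_allpairs_dep mulr_suml.
apply: eq_bigr => t _; rewrite mulr_sumr; apply: eq_bigr => s _ /=.
by rewrite eval_word_cat mulrnAl mulrnAr -mulrnA mulnC.
Qed.

Definition pos_laurent_letter (j : 'I_m) (b : bool) : pos_laurent m :=
  [:: (1%N, [:: (j, b)])].

Lemma eval_pos_laurent_letter x j b :
  eval_pos_laurent x (pos_laurent_letter j b) = if b then x j else (x j)^-1.
Proof. by rewrite /eval_pos_laurent big_seq1 /eval_word big_seq1. Qed.

Definition pos_laurent_rename (f : 'I_m -> 'I_m) P : pos_laurent m :=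
  [seq (t.1, [seq (f l.1, l.2) | l <- t.2]) | t <- P].

Lemma eval_pos_laurent_rename x f P :
  eval_pos_laurent x (pos_laurent_rename f P) = eval_pos_laurent (x \o f) P.
Proof.
rewrite /eval_pos_laurent big_map; apply: eq_bigr => t _.
by rewrite /eval_word big_map.
Qed.

Lemma eq_eval_pos_laurent x y P : x =1 y -> eval_pos_laurent x P = eval_pos_laurent y P.
Proof.
move=> exy; apply: eq_bigr => t _; congr (_ *+ _).
by apply: eq_bigr => l _; rewrite exy.
Qed.

End PosLaurentAlgebra.

(** [side_mul false] is the product of the converse ring [R^c]: statements
   about [side_mul b] are proved in [R] and transported to [R^c]. *)
Definition side_mul (R : unitRingType) (b : bool) (a c : R) : R :=
  if b then a * c else c * a.

Section SideMul.
Variable R : unitRingType.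
Implicit Types (b : bool) (a c d : R).

Lemma side_mul_negb b a c : side_mul (~~ b) a c = side_mul b c a.
Proof. by case: b. Qed.

Lemma side_mulDr b a c d : side_mul b a (c + d) = side_mul b a c + side_mul b a d.
Proof. by case: b; rewrite /side_mul ?mulrDr ?mulrDl. Qed.

Lemma side_mulVK b a c : a \is a GRing.unit -> side_mul b a (side_mul b a^-1 c) = c.
Proof. by case: b => ua; rewrite /side_mul ?mulVKr ?mulrVK. Qed.

Lemma invr_side_mul b a c : a \is a GRing.unit -> c \is a GRing.unit ->
  (side_mul b a c)^-1 = side_mul b c^-1 a^-1.
Proof. by case: b => ua uc; rewrite /side_mul invrM. Qed.

End SideMul.

Section ExchangeAlgebra.
Variable R : unitRingType.
Implicit Types a b c d : R.

Lemma exchange_ratio a b c d : a \is a GRing.unit -> d \is a GRing.unit ->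
  a * b = c * d + 1 -> b * d^-1 = a^-1 * c + a^-1 * d^-1.
Proof.
move=> ua ud abcd.
by rewrite -[b](mulKr ua) abcd mulrDr mulr1 mulrA mulrDl mulrK.
Qed.

Lemma exchange_inv_ratio a b c d : b \is a GRing.unit -> c \is a GRing.unit ->
  a * b = c * d + 1 -> c^-1 * b^-1 = c^-1 * a - d * b^-1.
Proof.
move=> ub uc abcd.
by rewrite -[a](mulrK ub) abcd mulrDl mul1r mulrDr mulrA mulKr // addrC addKr.
Qed.

Lemma defect_shift_identity (xn xK t rK r0 rn : R) :
    r0 \is a GRing.unit -> rn \is a GRing.unit ->
  xK = xn * rn -> t - rK = r0^-1 - rn^-1 -> xK * t - xK * rK = (xK - xn * r0) * r0^-1.
Proof. by move=> ur0 urn xKE trK; rewrite -mulrBr trK mulrBr mulrBl !mulrK // xKE mulrK. Qed.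

End ExchangeAlgebra.

Section SideExchange.
Variable R : unitRingType.
Implicit Types a b c d : R.

Lemma side_exchange_ratio s a b c d : a \is a GRing.unit -> d \is a GRing.unit ->
  side_mul s a b = side_mul s c d + 1 ->
  side_mul s b d^-1 = side_mul s a^-1 c + side_mul s a^-1 d^-1.
Proof. by case: s; [exact: exchange_ratio | exact: (@exchange_ratio R^c)]. Qed.

Lemma side_exchange_inv_ratio s a b c d : b \is a GRing.unit -> c \is a GRing.unit ->
  side_mul s a b = side_mul s c d + 1 ->
  side_mul s c^-1 b^-1 = side_mul s c^-1 a - side_mul s d b^-1.
Proof. by case: s; [exact: exchange_inv_ratio | exact: (@exchange_inv_ratio R^c)]. Qed.

Lemma side_defect_shift_identity s (xn xK t rK r0 rn : R) :
    r0 \is a GRing.unit -> rn \is a GRing.unit ->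
  xK = side_mul s xn rn -> t - rK = r0^-1 - rn^-1 ->
  side_mul s xK t - side_mul s xK rK = side_mul s (xK - side_mul s xn r0) r0^-1.
Proof.
by case: s; [exact: defect_shift_identity | exact: (@defect_shift_identity R^c)].
Qed.

End SideExchange.

(** The two relations of the theorem read along a window starting at an index
   of parity [e]: position [j] uses the second relation when [e + j] is odd
   and the first one, written in the converse ring, when it is even. *)
Definition recurrent (K e : nat) (A : unitRingType) (x : nat -> A) : Prop :=
  (forall j, x j \is a GRing.unit) /\
  (forall j, side_mul (odd (e + j)) (x j) (x (j + K).+1)
             = side_mul (odd (e + j)) (x (j + K)) (x j.+1) + 1).

Section Recurrence.
Variables (K e : nat) (A : unitRingType) (x : nat -> A).
Local Notation o j := (odd (e + j)).

Definition ratio j := side_mul (o j) (x j)^-1 (x (j + K)).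
Definition ratio_incr j := side_mul (o j) (x j)^-1 (x j.+1)^-1.
Definition defect a n := x (n + K) - side_mul (o n) (x n) (ratio a).

Hypothesis x_rec : recurrent K e x.
Let x_unit j : x j \is a GRing.unit. Proof. exact: x_rec.1. Qed.
Let x_exchange := x_rec.2.

Lemma ratio_unit j : ratio j \is a GRing.unit.
Proof. by rewrite /ratio /side_mul; case: (o j); rewrite ?unitrMl ?unitrMr ?unitrV. Qed.

Lemma mul_ratio j : side_mul (o j) (x j) (ratio j) = x (j + K).
Proof. exact: side_mulVK. Qed.

Lemma ratio_succ j : ratio j.+1 = side_mul (o j) (x (j + K).+1) (x j.+1)^-1.
Proof. by rewrite /ratio addnS /= side_mul_negb addSn. Qed.

Lemma ratioS j : ratio j.+1 = ratio j + ratio_incr j.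
Proof.
by rewrite ratio_succ; apply: side_exchange_ratio (x_unit _) (x_unit _) (x_exchange j).
Qed.

Hypothesis K_even : ~~ odd K.

Lemma odd_addK j : o (j + K) = o j.
Proof. by rewrite addnA oddD (negbTE K_even) addbF. Qed.

Lemma ratio_incr_shift j : ratio_incr (j + K) = (ratio j)^-1 - (ratio j.+1)^-1.
Proof.
rewrite ratio_succ /ratio_incr /ratio odd_addK !invr_side_mul ?unitrV ?x_unit // !invrK.
exact: side_exchange_inv_ratio (x_unit _) (x_unit _) (x_exchange j).
Qed.

Lemma ratio_invariant j : ratio (j + K) + (ratio j)^-1 = ratio K + (ratio 0)^-1.
Proof.
elim: j => [|j IHj]; first by rewrite add0n.
by rewrite -IHj addSn ratioS ratio_incr_shift addrA addrNK.
Qed.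

Lemma defectS a n : defect a n = defect a.+1 n + side_mul (o n) (x n) (ratio_incr a).
Proof. by rewrite /defect ratioS side_mulDr opprD addrA subrK. Qed.

Lemma defect_diag n : defect n n = 0.
Proof. by rewrite /defect mul_ratio subrr. Qed.

Lemma defect_shift n : defect K (n + K) = side_mul (o n) (defect 0 n) (ratio 0)^-1.
Proof.
rewrite /defect -(mul_ratio (n + K)) odd_addK.
apply: (side_defect_shift_identity (ratio_unit 0) (ratio_unit n) (esym (mul_ratio n))).
by rewrite -[ratio (n + K)](addrK (ratio n)^-1) ratio_invariant addrAC [ratio K + _]addrC addrK.
Qed.

End Recurrence.

Section Positivity.
Variables (K : nat) (hyp : forall A : unitRingType, (nat -> A) -> Prop).
Implicit Types f g : forall A : unitRingType, (nat -> A) -> A.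

Definition positive f : Prop :=
  exists P : pos_laurent K.+1, forall (A : unitRingType) (x : nat -> A),
    hyp x -> f A x = eval_pos_laurent (fun j : 'I_K.+1 => x j) P.

Lemma positive_ext f g :
  (forall A x, hyp x -> f A x = g A x) -> positive f -> positive g.
Proof. by move=> efg [P fP]; exists P => A x hx; rewrite -efg // fP. Qed.

Lemma positive0 : positive (fun _ _ => 0).
Proof. by exists [::] => A x _; rewrite /eval_pos_laurent big_nil. Qed.

Lemma positiveD f g : positive f -> positive g -> positive (fun A x => f A x + g A x).
Proof.
by move=> [P fP] [Q gQ]; exists (P ++ Q) => A x hx; rewrite eval_pos_laurent_cat fP ?gQ.
Qed.

Lemma positive_side_mul b f g :
  positive f -> positive g -> positive (fun A x => side_mul b (f A x) (g A x)).
Proof.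
move=> [P fP] [Q gQ].
exists (if b then pos_laurent_mul P Q else pos_laurent_mul Q P) => A x hx.
by rewrite /side_mul; case: b; rewrite eval_pos_laurent_mul fP ?gQ.
Qed.

Lemma positive_var j : (j <= K)%N -> positive (fun _ x => x j).
Proof.
move=> jK; exists (pos_laurent_letter (Ordinal (jK : j < K.+1)%N) true) => A x _.
by rewrite eval_pos_laurent_letter.
Qed.

Lemma positive_inv_var j : (j <= K)%N -> positive (fun _ x => (x j)^-1).
Proof.
move=> jK; exists (pos_laurent_letter (Ordinal (jK : j < K.+1)%N) false) => A x _.
by rewrite eval_pos_laurent_letter.
Qed.

End Positivity.

Arguments positive0 {K hyp}.
Arguments positive_var {K hyp j}.
Arguments positive_inv_var {K hyp j}.

Section PositiveRecurrence.
Variables (K e : nat).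
Hypotheses (K_even : ~~ odd K) (K_gt0 : (0 < K)%N).
Local Notation pos := (positive K (recurrent K e)).

Lemma positive_ratio0 : pos (fun _ x => ratio K e x 0).
Proof. exact: positive_side_mul (positive_inv_var (leq0n K)) (positive_var (leqnn K)). Qed.

Lemma positive_ratio0_inv : pos (fun _ x => (ratio K e x 0)^-1).
Proof.
apply: positive_ext (positive_side_mul (odd (e + 0))
  (positive_inv_var (leqnn K)) (positive_var (leq0n K))) => A x [x_unit _].
by rewrite /ratio invr_side_mul ?unitrV // invrK.
Qed.

Lemma positive_ratio_incr a : (a < K)%N -> pos (fun _ x => ratio_incr e x a).
Proof.
by move=> aK; apply: positive_side_mul (positive_inv_var (ltnW aK)) (positive_inv_var aK).
Qed.

Lemma positive_defect_lift n c : (c <= K)%N ->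
  pos (fun _ x => x n) -> pos (fun _ x => defect K e x c n) ->
  pos (fun _ x => defect K e x 0 n).
Proof.
move=> + pos_x; elim: c => [//|c IHc] cK pos_dc; apply: IHc (ltnW cK) _.
apply: positive_ext
  (positiveD pos_dc (positive_side_mul (odd (e + n)) pos_x (positive_ratio_incr cK))) => A x hx.
by rewrite [RHS](defectS hx).
Qed.

Lemma positive_entry_defect n :
  pos (fun _ x => x n) /\ pos (fun _ x => defect K e x 0 n).
Proof.
elim/ltn_ind: n => n IHn.
have [nK | Kn] := leqP n K.
  split; first exact: positive_var.
  apply: positive_defect_lift nK (positive_var nK) _.
  by apply: positive_ext positive0 => A x hx; rewrite defect_diag.
have [m mn ->] : exists2 m, (m < n)%N & n = (m + K)%N by exists (n - K)%N; lia.
have [pos_xm pos_dm] := IHn m mn.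
have pos_x : pos (fun _ x => x (m + K)%N).
  apply: positive_ext (positiveD pos_dm (positive_side_mul (odd (e + m)) pos_xm positive_ratio0)).
  by move=> A x _; rewrite /defect subrK.
split=> //; apply: positive_defect_lift (leqnn K) pos_x _.
apply: positive_ext (positive_side_mul (odd (e + m)) pos_dm positive_ratio0_inv) => A x hx.
by rewrite defect_shift.
Qed.

End PositiveRecurrence.

Definition exchange (A : unitRingType) (u : int -> A) (a b c d : int) : Prop :=
  u a * u b = u c * u d + 1.

Lemma exchange_congr (A : unitRingType) (u : int -> A) (a b c d a' b' c' d' : int) :
  a = a' -> b = b' -> c = c' -> d = d' -> exchange u a b c d -> exchange u a' b' c' d'.
Proof. by move=> -> -> -> ->. Qed.

Definition int_recurrence (k : nat) (A : unitRingType) (u : int -> A) : Prop :=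
  [/\ forall m, u m \is a GRing.unit,
      forall m : int,
        exchange u (2 * m + 2 * k%:Z + 1) (2 * m) (2 * m + 1) (2 * m + 2 * k%:Z) &
      forall m : int,
        exchange u (2 * m + 1) (2 * m + 2 * k%:Z + 2) (2 * m + 2 * k%:Z + 1) (2 * m + 2)].

Section IntRecurrence.
Variables (k : nat) (A : unitRingType) (u : int -> A).
Hypothesis u_rec : int_recurrence k u.

Lemma int_recurrence_opp : int_recurrence k (fun m => u (- m)).
Proof.
case: u_rec => u_unit ex1 ex2; split=> [m|m|m]; first exact: u_unit.
- by apply: exchange_congr (ex2 (- m - k%:Z - 1)); lia.
- by apply: exchange_congr (ex1 (- m - k%:Z - 1)); lia.
Qed.

Lemma int_recurrence_window (i h : int) (e : nat) :
  i = 2 * h + e%:Z -> recurrent (2 * k) e (fun j => u (i + j%:Z)).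
Proof.
case: u_rec => u_unit ex1 ex2 ->; split=> // j.
have := odd_double_half (e + j); rewrite -muln2.
case: (odd (e + j)) => /= ej.
- by apply: exchange_congr (ex2 (h + ((e + j)./2)%:Z)); lia.
- by apply: exchange_congr (ex1 (h + ((e + j)./2)%:Z)); lia.
Qed.

End IntRecurrence.

Lemma positive_window (k : nat) (hk : (1 <= k)%N) (i : int) (d : nat) :
  exists P : pos_laurent (2 * k).+1,
    forall (A : unitRingType) (u : int -> A), int_recurrence k u ->
      u (i + d%:Z) = eval_pos_laurent (fun j : 'I_(2 * k).+1 => u (i + (j : nat)%:Z)) P.
Proof.
have ihe : i = 2 * (i %/ 2)%Z + (absz (i %% 2)%Z)%:Z by lia.
have K_even : ~~ odd (2 * k) by rewrite oddM.
have K_gt0 : (0 < 2 * k)%N by rewrite muln_gt0.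
have [P HP] := (positive_entry_defect (absz (i %% 2)%Z) K_even K_gt0 d).1.
by exists P => A u u_rec; apply: HP (int_recurrence_window u_rec ihe).
Qed.

Theorem mainTheorem14 (k : nat) (hk : (1 <= k)%N) (n i : int) :
  exists P : pos_laurent (2 * k).+1,
    forall (A : unitRingType) (u : int -> A),
      (forall m : int, u m \is a GRing.unit) ->
      (forall m : int,
          u (2 * m + 2 * k%:Z + 1) * u (2 * m)
            = u (2 * m + 1) * u (2 * m + 2 * k%:Z) + 1) ->
      (forall m : int,
          u (2 * m + 1) * u (2 * m + 2 * k%:Z + 2)
            = u (2 * m + 2 * k%:Z + 1) * u (2 * m + 2) + 1) ->
      u n = eval_pos_laurent (fun j : 'I_(2 * k).+1 => u (i + (j : nat)%:Z)) P.
Proof.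
have [le_in | lt_ni] := lerP i n.
  have [P HP] := positive_window hk i (absz (n - i)%R).
  exists P => A u u_unit ex1 ex2; rewrite -HP; last by split.
  by congr u; lia.
(* Read backwards, the window at [i] is the window of [u (- _)] at [- (i + 2k)]. *)
pose d := absz (i + 2 * k%:Z - n)%R.
have [P HP] := positive_window hk (- (i + 2 * k%:Z))%R d.
exists (pos_laurent_rename (@rev_ord _) P) => A u u_unit ex1 ex2.
have u_rec : int_recurrence k u by split.
rewrite -[n]opprK (_ : - n = - (i + 2 * k%:Z) + d%:Z); last by rewrite /d; lia.
rewrite (HP _ _ (int_recurrence_opp u_rec)) eval_pos_laurent_rename.
apply: eq_eval_pos_laurent => j /=.
by congr u; have := ltn_ord j; lia.
Qed.
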